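(* Let $L\ge2$, let $\boldsymbol\gamma\in\mathbb R^L$, and let $\Omega$ be a symmetric positive definite $L\times L$ matrix such that $\lambda^{EGMM}_k>0$ for all $k$, where $\lambda^{EGMM}_k=\gamma_k[\Omega^{-1}\boldsymbol\gamma]_k/(\boldsymbol\gamma'\Omega^{-1}\boldsymbol\gamma)$. Then for each $\ell$, viewing $\lambda^{EGMM}_\ell$ as a function of the diagonal entry $[\Omega]_{\ell\ell}$ with all other entries of $\Omega$ held fixed, $$\frac{\partial\lambda^{EGMM}_\ell}{\partial[\Omega]_{\ell\ell}}<0.$$
   Context: In the paper, $\boldsymbol\gamma=(\mathrm{Cov}(D_i,Z_{1i}),\dots,\mathrm{Cov}(D_i,Z_{Li}))'$ are first-stage covariances of a binary treatment with $L$ binary instruments and $\Omega$ is the second moment matrix of the IV moment vector; $\lambda^{EGMM}$ are the implied efficient-GMM weights on the instrument-specific Wald estimands. The result is motivated by the premise that increasing within-complier treatment-effect variance for instrument $\ell$ increases $[\Omega]_{\ell\ell}$ while leaving other entries unchanged. *)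

From HB Require Import structures.
From mathcomp Require Import all_boot all_order all_algebra.
From mathcomp Require Import all_classical all_reals all_analysis.
Set Implicit Arguments. Unset Strict Implicit. Unset Printing Implicit Defensive.
Import Order.TTheory GRing.Theory Num.Theory.
Import numFieldNormedType.Exports.
Local Open Scope ring_scope.

Definition sym_posdef (R : realType) (L : nat) (Om : 'M[R]_L) : Prop :=
  Om^T = Om /\ forall x : 'cV[R]_L, x != 0 -> 0 < (x^T *m Om *m x) 0 0.

Definition lambda_EGMM (R : realType) (L : nat) (gamma : 'cV[R]_L)
    (Om : 'M[R]_L) (k : 'I_L) : R :=
  gamma k 0 * (invmx Om *m gamma) k 0 / (gamma^T *m invmx Om *m gamma) 0 0.

Definition lambda_diag (R : realType) (L : nat) (gamma : 'cV[R]_L)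
    (Om : 'M[R]_L) (l : 'I_L) (t : R) : R :=
  lambda_EGMM gamma (\matrix_(i, j) (if (i == l) && (j == l) then t else Om i j)) l.

From HB Require Import structures.
From mathcomp Require Import all_boot all_order all_algebra.
From mathcomp Require Import all_classical all_reals all_analysis.
From mathcomp Require Import ring.
Set Implicit Arguments. Unset Strict Implicit. Unset Printing Implicit Defensive.
Import Order.TTheory GRing.Theory Num.Theory.
Import numFieldNormedType.Exports.
Local Open Scope ring_scope.

(* Write B = Om^-1, v = B gamma and q = gamma' B gamma, so that
   lambda_l = gamma_l v_l / q.  Moving [Om]_ll by s is a rank-one update of Om,
   and the Sherman-Morrison formula gives
     lambda_l(s) = gamma_l v_l / (q + s (B_ll q - v_l^2)),
   whose derivative at s = 0 is -lambda_l (B_ll q - v_l^2) / q.  The gap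
   B_ll q - v_l^2 is positive by the strict Cauchy-Schwarz inequality for the
   inner product B applied to e_l and gamma; these are not parallel because
   lambda_k > 0 forces gamma_k <> 0, and L >= 2 provides such a k different
   from l. *)

Section PositiveDefinite.
Variables (R : realType) (L : nat) (Om : 'M[R]_L).
Hypothesis Om_spd : sym_posdef Om.

Lemma sym_posdef_unit : Om \in unitmx.
Proof.
case: Om_spd => _ Om_pd; rewrite unitmxE unitfE.
apply/negP => /det0P[v v_neq0 vOm].
have vT_neq0 : v^T != 0 by rewrite -trmx0 (inj_eq trmx_inj).
by have := Om_pd _ vT_neq0; rewrite trmxK vOm mul0mx mxE ltxx.
Qed.

Lemma sym_posdef_invmx : sym_posdef (invmx Om).
Proof.
have Om_unit := sym_posdef_unit; case: Om_spd => Om_sym Om_pd.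
split=> [|x x_neq0]; first by rewrite trmx_inv Om_sym.
set y := invmx Om *m x.
have y_neq0 : y != 0.
  by apply: contraNneq x_neq0 => y0; rewrite -(mulKVmx Om_unit x) -/y y0 mulmx0.
suff -> : x^T *m invmx Om *m x = y^T *m Om *m y by exact: Om_pd.
by rewrite /y trmx_mul trmx_inv Om_sym -!mulmxA (mulKVmx Om_unit).
Qed.

End PositiveDefinite.

Lemma quad_form_delta_sub (R : comNzRingType) L (B : 'M[R]_L) (g : 'cV[R]_L)
    (l : 'I_L) (x y : R) :
  B^T = B ->
  let w := x *: delta_mx l 0 - y *: g in
  (w^T *m B *m w) 0 0 =
  x ^+ 2 * B l l - 2 * x * y * (B *m g) l 0 + y ^+ 2 * (g^T *m B *m g) 0 0.
Proof.
move=> B_sym w.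
have gTB : g^T *m B = (B *m g)^T by rewrite trmx_mul B_sym.
have wT : w^T = x *: delta_mx 0 l - y *: g^T.
  by rewrite [w^T]linearB !linearZ /= trmx_delta.
rewrite wT /w !(mulmxBl, mulmxBr) -!(scalemxAl, scalemxAr) gTB -rowE -!colE.
rewrite -!row_mul; set v := B *m g; set q := v^T *m g.
by rewrite !mxE; ring.
Qed.

Lemma posdef_cauchy_schwarz_delta_lt (R : realType) L (B : 'M[R]_L)
    (g : 'cV[R]_L) (l k : 'I_L) :
  sym_posdef B -> k != l -> g k 0 != 0 ->
  ((B *m g) l 0) ^+ 2 < B l l * (g^T *m B *m g) 0 0.
Proof.
move=> [B_sym B_pd] kl gk_neq0.
set vl := (B *m g) l 0; set q := (g^T *m B *m g) 0 0.
have q_gt0 : 0 < q by apply: B_pd; apply: contraNneq gk_neq0 => ->; rewrite mxE.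
set w := q *: delta_mx l 0 - vl *: g.
have w_neq0 : w != 0.
  apply/eqP => /matrixP w0.
  have vl0 : vl = 0.
    move: (w0 k 0); rewrite !mxE (negbTE kl) mulr0 sub0r => /eqP.
    by rewrite oppr_eq0 mulf_eq0 (negbTE gk_neq0) orbF => /eqP.
  move: (w0 l 0); rewrite !mxE !eqxx vl0 mul0r subr0 mulr1 => q0.
  by rewrite q0 ltxx in q_gt0.
have := B_pd w w_neq0; rewrite quad_form_delta_sub // -/vl -/q.
have -> : q ^+ 2 * B l l - 2 * q * vl * vl + vl ^+ 2 * q =
          q * (B l l * q - vl ^+ 2) by ring.
by rewrite pmulr_rgt0 // subr_gt0.
Qed.

Lemma subZmxE (R : pzRingType) m n (A C : 'M[R]_(m, n)) c i j :
  (A - c *: C) i j = A i j - c * C i j.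
Proof. by rewrite !mxE. Qed.

Section DiagonalUpdate.
Variables (F : fieldType) (L : nat) (l : 'I_L).

Lemma mul_delta_mxE m n (P : 'M[F]_(m, L)) (Q : 'M[F]_(L, n)) i j :
  (P *m delta_mx l l *m Q) i j = P i l * Q l j.
Proof.
rewrite -(mul_delta_mx (0 : 'I_1)) mulmxA -colE -mulmxA -rowE.
by rewrite !mxE big_ord1 !mxE.
Qed.

Lemma delta_mulmx_delta (B : 'M[F]_L) :
  delta_mx l l *m B *m delta_mx l l = B l l *: delta_mx l l.
Proof.
apply/matrixP => i j; rewrite -mulmxA -[delta_mx l l *m _]mul1mx mulmxA.
rewrite mul_delta_mxE -[B *m _]mulmx1 mul_delta_mxE.
by rewrite !mxE mulrCA -natrM mulnb !(eq_sym l).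
Qed.

Lemma set_diag_entryE (Om : 'M[F]_L) t :
  \matrix_(i, j) (if (i == l) && (j == l) then t else Om i j) =
  Om + (t - Om l l) *: delta_mx l l.
Proof.
apply/matrixP => i j; rewrite !mxE.
have [->|il] := eqVneq i l; have [->|jl] := eqVneq j l;
  by rewrite ?eqxx ?(negbTE il) ?(negbTE jl) ?mulr1 ?mulr0 ?addr0 // addrC subrK.
Qed.

Lemma invmx_add_delta (Om : 'M[F]_L) s :
  Om \in unitmx -> 1 + s * invmx Om l l != 0 ->
  invmx (Om + s *: delta_mx l l) =
  invmx Om - (s / (1 + s * invmx Om l l)) *: (invmx Om *m delta_mx l l *m invmx Om).
Proof.
set B := invmx Om; set a := B l l; set c := s / (1 + s * a) => Om_unit den_neq0.
set N := B - _ *: _.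
suff N_inv : (Om + s *: delta_mx l l) *m N = 1%:M.
  have [M_unit _] := mulmx1_unit N_inv.
  by rewrite -[N](mulKmx M_unit) N_inv mulmx1.
have cE : s * (c * a) = s - c by rewrite /c; field.
rewrite mulmxDl !mulmxBr -!scalemxAl -!scalemxAr !mulmxA mulmxV //.
rewrite mul1mx delta_mulmx_delta -scalemxAl !scalerA mulrA -mulrA cE -scalerBl.
by rewrite subKr subrK.
Qed.

End DiagonalUpdate.

Section AffineReciprocal.
Variables (R : realType) (x0 c d : R).
Hypothesis c_neq0 : c != 0.

Lemma near_affine_neq0 : \forall t \near x0, c + (t - x0) * d != 0.
Proof.
have aff_cvg : (c + (t - x0) * d @[t --> x0] --> c + (x0 - x0) * d)%classic.
  apply: cvgD; first exact: cvg_cst.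
  by apply: cvgMr_tmp; apply: cvgB; [exact: cvg_id | exact: cvg_cst].
by apply: cvgr_neq0 aff_cvg _; rewrite subrr mul0r addr0.
Qed.

Lemma is_derive_div_affine (K : R) :
  is_derive x0 1 (fun t => K / (c + (t - x0) * d)) (- (K * d / c ^+ 2)).
Proof.
have d_aff : is_derive x0 1 (fun t => c + (t - x0) * d) d.
  apply: (is_derive_eq (is_deriveD (is_derive_cst c x0 1)
    (is_deriveM (is_deriveB (is_derive_id x0 1) (is_derive_cst x0 x0 1))
      (is_derive_cst d x0 1)))).
  by rewrite scaler0 !add0r subr0; exact: mulr1.
have c_aff : c + (x0 - x0) * d != 0 by rewrite subrr mul0r addr0.
have df : K *: (- (c + (x0 - x0) * d) ^- 2 *: d) = - (K * d / c ^+ 2).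
  by rewrite subrr mul0r addr0 /GRing.scale /=; field.
exact: is_derive_eq (is_deriveZ K (@is_deriveV R _ x0 d 1 c_aff d_aff)) df.
Qed.

End AffineReciprocal.

Section DiagonalPerturbation.
Variables (R : realType) (L : nat) (g : 'cV[R]_L) (Om : 'M[R]_L) (l : 'I_L).
Hypotheses (Om_sym : Om^T = Om) (Om_unit : Om \in unitmx).

Local Notation B := (invmx Om).
Local Notation vl := ((B *m g) l 0).
Local Notation q := ((g^T *m B *m g) 0 0).
Local Notation gap := (B l l * q - vl ^+ 2).

Lemma lambda_diagE t : let s := t - Om l l in
  1 + s * B l l != 0 -> q + s * gap != 0 ->
  lambda_diag g Om l t = g l 0 * vl / (q + s * gap).
Proof.
move=> s den_neq0 q'_neq0.
have vl_tr : (g^T *m B) 0 l = vl by rewrite -{1}Om_sym -trmx_inv -trmx_mul mxE.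
rewrite /lambda_diag set_diag_entryE /lambda_EGMM invmx_add_delta // -/s.
set c := s / _.
have num : ((B - c *: (B *m delta_mx l l *m B)) *m g) l 0 = vl - c * (B l l * vl).
  by rewrite mulmxBl -scalemxAl -(mulmxA (B *m _)) subZmxE mul_delta_mxE.
have den : (g^T *m (B - c *: (B *m delta_mx l l *m B)) *m g) 0 0 = q - c * (vl * vl).
  rewrite mulmxBr mulmxBl -scalemxAr -scalemxAl subZmxE.
  have -> : g^T *m (B *m delta_mx l l *m B) *m g = g^T *m B *m delta_mx l l *m (B *m g).
    by rewrite !mulmxA.
  by rewrite mul_delta_mxE vl_tr.
have den' : q - c * (vl * vl) = (q + s * gap) / (1 + s * B l l) by rewrite /c; field.
rewrite num den den' /c; field.
by rewrite q'_neq0 den_neq0.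
Qed.

Lemma is_derive_lambda_diag : q != 0 ->
  is_derive (Om l l) 1 (lambda_diag g Om l) (- (lambda_EGMM g Om l * gap / q)).
Proof.
move=> q_neq0.
have lambda_near : \forall t \near Om l l,
    g l 0 * vl / (q + (t - Om l l) * gap) = lambda_diag g Om l t.
  near=> t; rewrite lambda_diagE //; near: t; exact: near_affine_neq0.
apply: near_eq_is_derive lambda_near _.
apply: is_derive_eq (is_derive_div_affine _ _ q_neq0 _) _.
by rewrite /lambda_EGMM; field.
Unshelve. all: by end_near.
Qed.

End DiagonalPerturbation.

Lemma exists_ord_neq n (i : 'I_n) : (1 < n)%N -> exists j : 'I_n, j != i.
Proof.
move=> n_gt1; have : (0 < #|predC1 i|)%N.
  by rewrite cardC1 card_ord -ltnS prednK // ltnW.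
by case/card_gt0P => j; exists j.
Qed.

Theorem proposition18 (R : realType) (L : nat) (gamma : 'cV[R]_L)
    (Om : 'M[R]_L) :
  (2 <= L)%N ->
  sym_posdef Om ->
  (forall k : 'I_L, 0 < lambda_EGMM gamma Om k) ->
  forall l : 'I_L,
    derivable (lambda_diag gamma Om l) (Om l l) 1 /\
    derive1 (lambda_diag gamma Om l) (Om l l) < 0.
Proof.
move=> L_ge2 Om_spd lambda_gt0 l.
have [Om_sym _] := Om_spd; have Om_unit := sym_posdef_unit Om_spd.
have B_spd := sym_posdef_invmx Om_spd.
have [k kl] := exists_ord_neq l L_ge2.
have gk_neq0 : gamma k 0 != 0.
  by apply: contraTneq (lambda_gt0 k) => gk0; rewrite /lambda_EGMM gk0 !mul0r ltxx.
have q_gt0 : 0 < (gamma^T *m invmx Om *m gamma) 0 0.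
  by apply: B_spd.2; apply: contraNneq gk_neq0 => ->; rewrite mxE.
have gap_gt0 := posdef_cauchy_schwarz_delta_lt B_spd kl gk_neq0.
have [lambda_derivable lambda_derive] :=
  is_derive_lambda_diag l Om_sym Om_unit (lt0r_neq0 q_gt0).
split=> //; rewrite derive1E lambda_derive oppr_lt0.
by rewrite divr_gt0 // mulr_gt0 ?subr_gt0.
Qed.
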